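(* Let $\delta\geq0$, $0\leq2\theta<\alpha$, $\varepsilon>0$ with $\varepsilon^{\alpha-2\theta}=\frac14$, and $$\lambda_\pm=\frac{|\xi|^{2\theta}}{2(1+|\xi|^{2\delta})}\left(-1\pm\sqrt{1-4|\xi|^{2(\alpha-2\theta)}(1+|\xi|^{2\delta})}\right).$$ If $|\xi|<\varepsilon$ then: (i) $-4(2-\sqrt2)|\xi|^{2(\alpha-\theta)}\leq\lambda_+\leq-|\xi|^{2(\alpha-\theta)}$ (so $\lambda_+\approx-|\xi|^{2(\alpha-\theta)}$); (ii) $-|\xi|^{2\theta}\leq\lambda_-\leq-\frac14\left(1+\frac1{\sqrt2}\right)|\xi|^{2\theta}$ (so $\lambda_-\approx-|\xi|^{2\theta}$); (iii) $\lambda_+-\lambda_-\approx|\xi|^{2\theta}$.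
   Context: $g\approx f$ means $g\lesssim f$ and $f\lesssim g$, where $f\lesssim g$ means $0\leq f\leq Cg$ for a constant $C>0$ independent of $\xi$ (for negative quantities, $\lambda\approx-h$ means $-\lambda\approx h$). *)

From mathcomp Require Import all_boot all_order all_algebra.
From mathcomp Require Import all_classical all_reals all_analysis.
Set Implicit Arguments. Unset Strict Implicit. Unset Printing Implicit Defensive.
Import Order.TTheory GRing.Theory Num.Theory.
Local Open Scope ring_scope.

Definition enorm (R : realType) (n : nat) (xi : 'rV[R]_n) : R :=
  Num.sqrt (\sum_(i < n) xi ord0 i ^+ 2).

(* lambda_{+/-} with real powers via powR (convention 0 `^ 0 = 1). *)
Definition lam_pm (R : realType) (s : R) (delta theta alpha : R) (r : R) : R :=
  r `^ (2 * theta) / (2 * (1 + r `^ (2 * delta))) *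
  (-1 + s * Num.sqrt (1 - 4 * r `^ (2 * (alpha - 2 * theta)) * (1 + r `^ (2 * delta)))).

Definition lam_plus (R : realType) (delta theta alpha : R) (n : nat) (xi : 'rV[R]_n) : R :=
  lam_pm 1 delta theta alpha (enorm xi).
Definition lam_minus (R : realType) (delta theta alpha : R) (n : nat) (xi : 'rV[R]_n) : R :=
  lam_pm (-1) delta theta alpha (enorm xi).

From mathcomp Require Import all_boot all_order all_algebra.
From mathcomp Require Import all_classical all_reals all_analysis.
From mathcomp Require Import ring lra.
Set Implicit Arguments. Unset Strict Implicit. Unset Printing Implicit Defensive.
Import Order.TTheory GRing.Theory Num.Theory.
Local Open Scope ring_scope.

(* With Y = |xi|^(2 theta), p = |xi|^(2 delta) and q = |xi|^(2 (alpha - 2 theta)),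
   lambda_(+/-) = c (-1 +/- s) where c = Y / (2 (1 + p)) and s^2 = 1 - 4 q (1 + p).
   For |xi| < eps we have p <= 1 and q <= 1/16, so s lies in [1/sqrt 2, 1].
   Then lambda_+ = - c (1 - s) is comparable to c (1 - s^2) = 2 Y q, while
   lambda_- = - c (1 + s) and lambda_+ - lambda_- = 2 c s are comparable to c,
   hence to Y. *)

Definition quad_root (R : rcfType) (e Y p q : R) : R :=
  Y / (2 * (1 + p)) * (-1 + e * Num.sqrt (1 - 4 * q * (1 + p))).

Lemma lam_pmE (R : realType) (e delta theta alpha r : R) :
  lam_pm e delta theta alpha r =
  quad_root e (r `^ (2 * theta)) (r `^ (2 * delta)) (r `^ (2 * (alpha - 2 * theta))).
Proof. by []. Qed.

Lemma sqrt2_conj_mul (R : rcfType) :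
  (2 - Num.sqrt 2) * (1 + (Num.sqrt 2)^-1) = 1 :> R.
Proof.
have t_sqr : Num.sqrt 2 ^+ 2 = 2 :> R by rewrite sqr_sqrtr.
have t_neq0 : Num.sqrt 2 != 0 :> R by rewrite sqrtr_eq0 -ltNge.
apply/eqP; rewrite -subr_eq0.
have -> : (2 - Num.sqrt 2) * (1 + (Num.sqrt 2)^-1) - 1
          = (2 - Num.sqrt 2 ^+ 2) / Num.sqrt 2 :> R by field.
by rewrite t_sqr subrr mul0r.
Qed.

Lemma sqrtr2_le2 (R : rcfType) : Num.sqrt 2 <= 2 :> R.
Proof. by rewrite -(@ler_pXn2r _ 2) ?nnegrE ?sqrtr_ge0 // sqr_sqrtr //; lra. Qed.

Lemma quad_root_normal_form (R : rcfType) (Y p q : R) :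
  0 <= Y -> 0 <= p <= 1 -> 0 <= q <= 16^-1 ->
  exists c s : R, [/\ 0 <= c, Y = 2 * (1 + p) * c, 4 * q * (1 + p) = 1 - s ^+ 2,
    (Num.sqrt 2)^-1 <= s <= 1 & forall e, quad_root e Y p q = c * (-1 + e * s)].
Proof.
move=> Y_ge0 /andP[p_ge0 p_le1] /andP[q_ge0 q_le].
set s := Num.sqrt (1 - 4 * q * (1 + p)).
have s_ge0 : 0 <= s by exact: sqrtr_ge0.
have s_sqr : s ^+ 2 = 1 - 4 * q * (1 + p) by rewrite sqr_sqrtr //; nra.
have t_sqr : Num.sqrt 2 ^+ 2 = 2 :> R by rewrite sqr_sqrtr.
have t_gt0 : 0 < Num.sqrt 2 :> R by rewrite sqrtr_gt0.
exists (Y / (2 * (1 + p))), s; split=> //.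
- by rewrite divr_ge0 //; lra.
- by rewrite mulrC mulfVK //; lra.
- lra.
- have s_sqr_ge : 2^-1 <= s ^+ 2 by nra.
  apply/andP; split; last by nra.
  have st_ge0 : 0 <= s * Num.sqrt 2 by rewrite mulr_ge0 // ltW.
  have st_sqr : 1 <= (s * Num.sqrt 2) ^+ 2 by rewrite exprMn t_sqr; lra.
  by rewrite -[_^-1]mul1r ler_pdivrMr //; nra.
Qed.

Lemma quad_root_plus_bounds (R : rcfType) (Y p q : R) :
  0 <= Y -> 0 <= p <= 1 -> 0 <= q <= 16^-1 ->
  - 4 * (2 - Num.sqrt 2) * (Y * q) <= quad_root 1 Y p q
  /\ quad_root 1 Y p q <= - (Y * q).
Proof.
move=> Y_ge0 p_bd q_bd.
have [c [s [c_ge0 Y_eq disc /andP[s_lb s_ub] ->]]] := quad_root_normal_form Y_ge0 p_bd q_bd.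
have Yq : Y * q = c * (1 - s) * (1 + s) / 2 by rewrite Y_eq; nra.
have conj_ge : 0 <= (2 - Num.sqrt 2) * (1 + s) - 1.
  by rewrite subr_ge0 -{1}(sqrt2_conj_mul R) ler_wpM2l ?lerD2l // subr_ge0 sqrtr2_le2.
have s_gap : 0 <= 1 - s by rewrite subr_ge0.
have c_gap : 0 <= c * (1 - s) by rewrite mulr_ge0.
rewrite Yq; split.
- by have := mulr_ge0 c_gap conj_ge; nra.
- by have := mulr_ge0 c_gap s_gap; nra.
Qed.

Lemma quad_root_minus_bounds (R : rcfType) (Y p q : R) :
  0 <= Y -> 0 <= p <= 1 -> 0 <= q <= 16^-1 ->
  - Y <= quad_root (-1) Y p q
  /\ quad_root (-1) Y p q <= - (4^-1 * (1 + (Num.sqrt 2)^-1)) * Y.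
Proof.
move=> Y_ge0 /[dup] p_bd /andP[p_ge0 p_le1] q_bd.
have [c [s [c_ge0 -> _ /andP[s_lb s_ub] ->]]] := quad_root_normal_form Y_ge0 p_bd q_bd.
have u_ge0 : 0 <= (Num.sqrt 2)^-1 :> R by rewrite invr_ge0 sqrtr_ge0.
have cp_ge0 : 0 <= c * p by rewrite mulr_ge0.
have cs_ge0 : 0 <= c * (1 - s) by rewrite mulr_ge0 // subr_ge0.
have csu_ge0 : 0 <= c * (s - (Num.sqrt 2)^-1) by rewrite mulr_ge0 // subr_ge0.
have cpu_ge0 : 0 <= c * (1 - p) * (1 + (Num.sqrt 2)^-1).
  by rewrite !mulr_ge0 // ?subr_ge0 // addr_ge0.
split; nra.
Qed.

Lemma quad_root_gap_bounds (R : rcfType) (Y p q : R) :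
  0 <= Y -> 0 <= p <= 1 -> 0 <= q <= 16^-1 ->
  4^-1 * Y <= quad_root 1 Y p q - quad_root (-1) Y p q
  /\ quad_root 1 Y p q - quad_root (-1) Y p q <= Y.
Proof.
move=> Y_ge0 /[dup] p_bd /andP[p_ge0 p_le1] q_bd.
have [c [s [c_ge0 -> _ /andP[s_lb s_ub] rootE]]] := quad_root_normal_form Y_ge0 p_bd q_bd.
rewrite !rootE.
have half_le_s : 2^-1 <= s.
  by apply: le_trans s_lb; rewrite lef_pV2 ?posrE ?sqrtr_gt0 // sqrtr2_le2.
have cp_ge0 : 0 <= c * p by rewrite mulr_ge0.
have cs_ge0 : 0 <= c * (1 - s) by rewrite mulr_ge0 // subr_ge0.
have cs2_ge0 : 0 <= c * (s - 2^-1) by rewrite mulr_ge0 // subr_ge0.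
have cp1_ge0 : 0 <= c * (1 - p) by rewrite mulr_ge0 // subr_ge0.
split; nra.
Qed.

Lemma low_freq_powR_bounds (R : realType) (a delta eps r : R) :
  0 < a -> 0 <= delta -> eps `^ a = 4^-1 -> 0 <= r < eps ->
  0 <= r `^ (2 * delta) <= 1 /\ 0 <= r `^ (2 * a) <= 16^-1.
Proof.
move=> a_gt0 delta_ge0 eps_a /andP[r_ge0 r_lt].
have ra_le : r `^ a <= 4^-1.
  by rewrite -eps_a ge0_ler_powR ?nnegrE //; lra.
have r_lt1 : r < 1.
  rewrite ltNge; apply/negP => r_ge1.
  have : 1 `^ a <= r `^ a by apply: ge0_ler_powR; rewrite ?nnegrE //; lra.
  by rewrite powR1; lra.
split; apply/andP; split; rewrite ?powR_ge0 //.
- have : r `^ (2 * delta) <= 1 `^ (2 * delta).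
    by apply: ge0_ler_powR; rewrite ?nnegrE //; lra.
  by rewrite powR1.
- by rewrite mulrC powRrM powR_mulrn ?powR_ge0 //; have := powR_ge0 r a; nra.
Qed.

Theorem lemma2p2 (R : realType) (n : nat) (delta theta alpha eps : R)
  (hdelta : 0 <= delta) (htheta : 0 <= 2 * theta) (hta : 2 * theta < alpha)
  (heps : 0 < eps) (heps4 : eps `^ (alpha - 2 * theta) = 4^-1) :
  (forall xi : 'rV[R]_n, enorm xi < eps ->
     (- 4 * (2 - Num.sqrt 2) * enorm xi `^ (2 * (alpha - theta))
        <= lam_plus delta theta alpha xi
      /\ lam_plus delta theta alpha xi <= - enorm xi `^ (2 * (alpha - theta)))
  /\ (- enorm xi `^ (2 * theta) <= lam_minus delta theta alpha xi
      /\ lam_minus delta theta alpha xi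
           <= - (4^-1 * (1 + (Num.sqrt 2)^-1)) * enorm xi `^ (2 * theta)))
  /\ (exists c C : R, 0 < c /\ 0 < C /\
       forall xi : 'rV[R]_n, enorm xi < eps ->
         c * enorm xi `^ (2 * theta)
           <= lam_plus delta theta alpha xi - lam_minus delta theta alpha xi
         /\ lam_plus delta theta alpha xi - lam_minus delta theta alpha xi
           <= C * enorm xi `^ (2 * theta)).
Proof.
have a_gt0 : 0 < alpha - 2 * theta by lra.
have powR_split (r : R) :
    r `^ (2 * (alpha - theta)) = r `^ (2 * theta) * r `^ (2 * (alpha - 2 * theta)).
  rewrite -powRD; first by congr (_ `^ _); ring.
  by apply/implyP => /eqP; lra.
have freq_bounds (xi : 'rV[R]_n) : enorm xi < eps ->
    [/\ 0 <= enorm xi `^ (2 * theta), 0 <= enorm xi `^ (2 * delta) <= 1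
      & 0 <= enorm xi `^ (2 * (alpha - 2 * theta)) <= 16^-1].
  move=> xi_lt; have r_bd : 0 <= enorm xi < eps by rewrite sqrtr_ge0.
  have [p_bd q_bd] := low_freq_powR_bounds a_gt0 hdelta heps4 r_bd.
  by split=> //; exact: powR_ge0.
split.
- move=> xi /freq_bounds[Y_ge0 p_bd q_bd].
  rewrite /lam_plus /lam_minus !lam_pmE powR_split.
  by split; [exact: quad_root_plus_bounds | exact: quad_root_minus_bounds].
- exists 4^-1, 1; split; first lra; split; first lra.
  move=> xi /freq_bounds[Y_ge0 p_bd q_bd].
  have [gap_lb gap_ub] := quad_root_gap_bounds Y_ge0 p_bd q_bd.
  by rewrite /lam_plus /lam_minus !lam_pmE mul1r; split; [exact: gap_lb | exact: gap_ub].
Qed.
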